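(* Let $(A,f)$ be a finite-dimensional quadratic Lie algebra over a field $\mathbb{K}$ of characteristic zero, let $d$ be an $f$-skew-symmetric derivation of $A$, and let $(A_b,f_b)$ be the one-dimensional double extension of $(A,f)$ by $(b,d)$. Then $Z(A_b)=(Z(A)\cap\ker d)\oplus \mathbb{K}\beta$ if and only if $d$ is not an inner derivation of $A$. Otherwise $d=\mathrm{ad}\,x$ for some $x\in A$ and $Z(A_b)=(Z(A)\cap\ker d)\oplus\mathbb{K}\beta\oplus\mathbb{K}(b-x)$.
   Context: A quadratic Lie algebra $(A,f)$ is a Lie algebra with a non-degenerate symmetric bilinear form $f$ satisfying $f([x,y],z)+f(y,[x,z])=0$. A derivation $d$ is $f$-skew-symmetric if $f(d(x),y)+f(x,d(y))=0$ for all $x,y$. The one-dimensional double extension of $(A,f)$ by $(b,d)$ is the vector space $A_b=\mathbb{K}b\oplus A\oplus\mathbb{K}\beta$ with bracket $[\lambda b+a+\mu\beta,\lambda' b+a'+\mu'\beta]=\lambda d(a')-\lambda' d(a)+[a,a']_A+f(d(a),a')\beta$ ($\lambda,\lambda',\mu,\mu'\in\mathbb{K}$, $a,a'\in A$) and symmetric form $f_b(\lambda b+a+\mu\beta,\lambda' b+a'+\mu'\beta)=\lambda\mu'+\lambda'\mu+f(a,a')$. $Z(\cdot)$ denotes the centre. *)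

From mathcomp Require Import all_boot all_order all_algebra.
Set Implicit Arguments. Unset Strict Implicit. Unset Printing Implicit Defensive.
Import GRing.Theory.
Local Open Scope ring_scope.

Section LieDefs.
Variables (K : fieldType) (A : vectType K).

Definition bracket_bilinear (br : A -> A -> A) : Prop :=
  (forall (c : K) (x y z : A), br (c *: x + y) z = c *: br x z + br y z) /\
  (forall (c : K) (x y z : A), br z (c *: x + y) = c *: br z x + br z y).

Definition is_lie_algebra (br : A -> A -> A) : Prop :=
  [/\ bracket_bilinear br,
      (forall x, br x x = 0) &
      (forall x y z, br x (br y z) + br y (br z x) + br z (br x y) = 0)].

Definition form_bilinear (f : A -> A -> K) : Prop :=
  (forall (c : K) (x y z : A), f (c *: x + y) z = c * f x z + f y z) /\
  (forall (c : K) (x y z : A), f z (c *: x + y) = c * f z x + f z y).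

Definition is_quadratic_form (br : A -> A -> A) (f : A -> A -> K) : Prop :=
  [/\ form_bilinear f,
      (forall x y, f x y = f y x),
      (forall x, (forall y, f x y = 0) -> x = 0) &
      (forall x y z, f (br x y) z + f y (br x z) = 0)].

Definition is_linear_map (d : A -> A) : Prop :=
  forall (c : K) (x y : A), d (c *: x + y) = c *: d x + d y.

Definition is_derivation (br : A -> A -> A) (d : A -> A) : Prop :=
  is_linear_map d /\ (forall x y, d (br x y) = br (d x) y + br x (d y)).

Definition f_skew (f : A -> A -> K) (d : A -> A) : Prop :=
  forall x y, f (d x) y + f x (d y) = 0.

Definition is_inner (br : A -> A -> A) (d : A -> A) : Prop :=
  exists x : A, forall y, d y = br x y.

Definition centre (T : Type) (z0 : T) (br : T -> T -> T) (z : T) : Prop :=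
  forall y, br z y = z0.

(* One-dimensional double extension A_b = K b (+) A (+) K beta,
   an element lambda b + a + mu beta is encoded as (lambda, a, mu). *)
Definition dext_bracket (br : A -> A -> A) (f : A -> A -> K) (d : A -> A)
  (u v : K * A * K) : K * A * K :=
  let: (l, a, _) := u in
  let: (l', a', _) := v in
  (0, l *: d a' - l' *: d a + br a a', f (d a) a').

Definition dext_form (f : A -> A -> K) (u v : K * A * K) : K :=
  let: (l, a, m) := u in
  let: (l', a', m') := v in
  l * m' + l' * m + f a a'.

End LieDefs.

(** Writing an element of [A_b] as [l b + a + m beta], it is central iff
    [d a = 0] and [l d + ad a = 0].  If [l <> 0] this exhibits [d] as the inner
    derivation [ad (- a / l)]; conversely, if [d = ad x] then [b - x] is central.
    So the coordinate along [b] of a central element can be nonzero exactly when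
    [d] is inner, and in that case subtracting [l (b - x)] reduces to [l = 0]. *)
From mathcomp Require Import all_boot all_order all_algebra.
Set Implicit Arguments. Unset Strict Implicit. Unset Printing Implicit Defensive.
Import GRing.Theory.
Local Open Scope ring_scope.

Section LinearMaps.
Variables (K : fieldType) (A : vectType K).

Lemma linear_map0 (g : A -> A) : is_linear_map g -> g 0 = 0.
Proof.
move=> gL; have := gL 1 0 0; rewrite scaler0 addr0 scale1r => g0.
by apply: (addrI (g 0)); rewrite addr0 -g0.
Qed.

Lemma linear_mapZ (g : A -> A) : is_linear_map g -> forall c x, g (c *: x) = c *: g x.
Proof. by move=> gL c x; rewrite -[c *: x]addr0 gL linear_map0 // addr0. Qed.

Lemma linear_mapD (g : A -> A) : is_linear_map g -> forall x y, g (x + y) = g x + g y.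
Proof. by move=> gL x y; rewrite -[x]scale1r gL !scale1r. Qed.

Lemma linear_mapN (g : A -> A) : is_linear_map g -> forall x, g (- x) = - g x.
Proof. by move=> gL x; rewrite -scaleN1r linear_mapZ // scaleN1r. Qed.

Section Bracket.
Variables (br : A -> A -> A) (brB : bracket_bilinear br).

Lemma bracketZl c x y : br (c *: x) y = c *: br x y.
Proof. by apply: (linear_mapZ (g := br^~ y)) => c' x' z; apply: brB.1. Qed.

Lemma bracketDl x x' y : br (x + x') y = br x y + br x' y.
Proof. by apply: (linear_mapD (g := br^~ y)) => c' x'' z; apply: brB.1. Qed.

Lemma bracket0l y : br 0 y = 0.
Proof. by apply: (linear_map0 (g := br^~ y)) => c x z; apply: brB.1. Qed.

Lemma bracket0r x : br x 0 = 0.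
Proof. by apply: linear_map0 => c y z; apply: brB.2. Qed.

End Bracket.

Lemma form_bilinear0l (f : A -> A -> K) : form_bilinear f -> forall y, f 0 y = 0.
Proof.
case=> fl _ y; have := fl 1 0 0 y; rewrite scaler0 addr0 mul1r => f0.
by apply: (addrI (f 0 y)); rewrite addr0 -f0.
Qed.

End LinearMaps.

Section DoubleExtensionCentre.
Variables (K : fieldType) (A : vectType K).
Variables (br : A -> A -> A) (f : A -> A -> K) (d : A -> A).
Hypotheses (brB : bracket_bilinear br) (br_alt : forall x, br x x = 0).
Hypotheses (fB : form_bilinear f) (dL : is_linear_map d).

Local Notation centre_b := (centre (0 : K * A * K) (dext_bracket br f d)).

Lemma dext_centreP l a m :
  centre_b (l, a, m) <-> d a = 0 /\ forall y, l *: d y + br a y = 0.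
Proof.
have d0 := linear_map0 dL; have bra0 := bracket0r brB a.
split=> [central | [da0 ad_a] [[l' a'] m'] /=].
- have := central (1, 0, 0); rewrite /= d0 bra0 scaler0 scale1r sub0r addr0.
  case=> /eqP; rewrite oppr_eq0 => /eqP da0 _; split=> // y.
  by have := central (0, y, 0); rewrite /= scale0r subr0; case.
- by rewrite da0 scaler0 subr0 ad_a form_bilinear0l.
Qed.

Lemma dext_centre_kernel a m : centre 0 br a -> d a = 0 -> centre_b (0, a, m).
Proof. by move=> a_central da0; apply/dext_centreP; split=> // y; rewrite scale0r add0r. Qed.

Lemma dext_centre_inner_of_scalar l a m :
  centre_b (l, a, m) -> l != 0 -> is_inner br d.
Proof.
case/dext_centreP=> _ ad_a l_neq0; exists (- l^-1 *: a) => y.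
apply: (scalerI l_neq0); rewrite bracketZl // scalerA.
by rewrite mulrN mulfV // scaleN1r; apply/eqP; rewrite -subr_eq0 opprK ad_a.
Qed.

Section InnerDerivation.
Variable x : A.
Hypothesis d_ad : forall y, d y = br x y.

Lemma dext_centre_inner z :
  centre_b z <-> exists (a : A) (mu lam : K),
    [/\ centre 0 br a, d a = 0 & z = (lam, a - lam *: x, mu)].
Proof.
have brZl := bracketZl brB; have brDl := bracketDl brB.
have dx0 : d x = 0 by rewrite d_ad br_alt.
case: z => [[l a] m]; split=> [/dext_centreP [da0 ad_a] | [a0 [mu [lam [a0_central da00 []]]]] -> -> ->].
- exists (a + l *: x), m, l; split; last by rewrite addrK.
  + by move=> y; rewrite brDl brZl -d_ad addrC ad_a.
  + by rewrite linear_mapD // da0 linear_mapZ // dx0 scaler0 addr0.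
- apply/dext_centreP; split.
    by rewrite linear_mapD // linear_mapN // linear_mapZ // dx0 scaler0 da00 subr0.
  move=> y; rewrite brDl a0_central add0r -scaleN1r brZl brZl -d_ad scalerA.
  by rewrite mulN1r scaleNr subrr.
Qed.

Lemma dext_centre_ad : centre_b (1, - x, 0).
Proof.
apply/dext_centre_inner; exists 0, 0, 1; split.
- exact: bracket0l.
- exact: linear_map0.
- by rewrite sub0r scale1r.
Qed.

End InnerDerivation.

Lemma dext_centre_outer : ~ is_inner br d -> forall z,
  centre_b z <-> exists (a : A) (mu : K),
    [/\ centre 0 br a, d a = 0 & z = (0, a, mu)].
Proof.
move=> not_inner [[l a] m]; split=> [central | [a0 [mu [a0_central da0 ->]]]].
- have l0 : l = 0.
    by have [//|/(dext_centre_inner_of_scalar central)/not_inner] := eqVneq l 0.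
  move: central; rewrite l0 => /dext_centreP [da0 ad_a]; exists a, m; split=> // y.
  by have := ad_a y; rewrite scale0r add0r.
- exact: dext_centre_kernel.
Qed.

End DoubleExtensionCentre.

Theorem lemma2p8 (K : fieldType) (A : vectType K)
  (br : A -> A -> A) (f : A -> A -> K) (d : A -> A) :
  [pchar K] =i pred0 ->
  is_lie_algebra br ->
  is_quadratic_form br f ->
  is_derivation br d ->
  f_skew f d ->
  ((forall z : K * A * K,
      centre (0 : K * A * K) (dext_bracket br f d) z <->
      exists (a : A) (mu : K),
        [/\ centre 0 br a, d a = 0 & z = (0, a, mu)])
   <-> ~ is_inner br d)
  /\
  (is_inner br d ->
   forall x : A, (forall y, d y = br x y) ->
   forall z : K * A * K,
     centre (0 : K * A * K) (dext_bracket br f d) z <->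
     exists (a : A) (mu lam : K),
       [/\ centre 0 br a, d a = 0 & z = (lam, a - lam *: x, mu)]).
Proof.
move=> _ [brB br_alt _] [fB _ _ _] [dL _] _.
split; last by move=> _ x d_ad; apply: dext_centre_inner.
split; last exact: dext_centre_outer.
move=> centre_eq [x d_ad].
have [a [mu [_ _ []]]] := (centre_eq _).1 (dext_centre_ad brB br_alt fB dL d_ad).
by move/eqP; rewrite oner_eq0.
Qed.
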